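(* If $\mathcal A\subseteq\binom{[n]}{k}$ is $t$-intersecting, then for every $1\le i<j\le n$, \[\zeta_{k-1}(\Delta_{ij}(\mathcal A))\ge\zeta_{k-1}(\mathcal A).\]
   Context: A family is $t$-intersecting if any two members share at least $t$ elements. For $\mathcal F\subseteq\binom{[n]}{k}$, $\zeta_{k-1}(\mathcal F)=|\{\{F,G\}:F,G\in\mathcal F,\ |F\cap G|=k-1\}|$. Shift operation: for $i,j\in[n]$ and $A\in\mathcal A$, $\delta_{ij}(A)=(A\setminus\{j\})\cup\{i\}$ if $j\in A$, $i\notin A$ and $(A\setminus\{j\})\cup\{i\}\notin\mathcal A$; otherwise $\delta_{ij}(A)=A$. Then $\Delta_{ij}(\mathcal A)=\{\delta_{ij}(A):A\in\mathcal A\}$. *)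

From mathcomp Require Import all_boot.
Set Implicit Arguments. Unset Strict Implicit. Unset Printing Implicit Defensive.

(* Ground set [n] is modelled as 'I_n (0-based); families are {set {set 'I_n}}. *)

Definition uniform (n k : nat) (A : {set {set 'I_n}}) : Prop :=
  forall F, F \in A -> #|F| = k.

Definition t_intersecting (n t : nat) (A : {set {set 'I_n}}) : Prop :=
  forall F G, F \in A -> G \in A -> F != G -> t <= #|F :&: G|.

Definition zeta_km1 (n k : nat) (A : {set {set 'I_n}}) : nat :=
  #|[set P : {set {set 'I_n}} |
      [exists F in A, exists G in A,
         [&& F != G, P == [set F; G] & #|F :&: G| == k.-1]]]|.

Definition delta (n : nat) (i j : 'I_n) (A : {set {set 'I_n}}) (F : {set 'I_n})
  : {set 'I_n} :=
  if [&& j \in F, i \notin F & (i |: (F :\ j)) \notin A]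
  then i |: (F :\ j) else F.

Definition Delta (n : nat) (i j : 'I_n) (A : {set {set 'I_n}}) : {set {set 'I_n}} :=
  [set delta i j A F | F in A].

From mathcomp Require Import all_boot perm.

Set Implicit Arguments. Unset Strict Implicit. Unset Printing Implicit Defensive.

(* Let s be the transposition (i j) acting on sets. Send each (k-1)-pair
   {F, G} of A to {delta F, delta G} when this is a (k-1)-pair of Delta(A),
   and to {s F, s G} otherwise. As delta is injective on A and s preserves
   intersection sizes, the first option fails only when exactly one of F, G
   is moved by delta; then {s F, s G} is a (k-1)-pair of Delta(A) by
   uniformity, and a pair of the second kind never coincides with one of the
   first kind, so the map is an injection of (k-1)-pairs. *)

Lemma set2_eq (T : finType) (a b c d : T) :
  [set a; b] = [set c; d] -> (a = c /\ b = d) \/ (a = d /\ b = c).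
Proof.
move=> E.
have : a \in [set c; d] by rewrite -E set21.
have : b \in [set c; d] by rewrite -E set22.
have : c \in [set a; b] by rewrite E set21.
have : d \in [set a; b] by rewrite E set22.
by move=> /set2P[] e1 /set2P[] e2 /set2P[] e3 /set2P[] e4; subst; auto.
Qed.

Lemma set2_inj_in (T U : finType) (D : {pred T}) (f : T -> U) (a b c d : T) :
  {in D &, injective f} -> a \in D -> b \in D -> c \in D -> d \in D ->
  [set f a; f b] = [set f c; f d] -> [set a; b] = [set c; d].
Proof.
move=> f_inj aD bD cD dD /set2_eq[[/f_inj-> // /f_inj-> //]|].
by case=> /f_inj-> // /f_inj-> //; rewrite setUC.
Qed.

Section SwapSet.

Variables (T : finType) (i j : T).

Definition swap_set (F : {set T}) : {set T} := tperm i j @: F.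

Lemma mem_swap_set (F : {set T}) x : (x \in swap_set F) = (tperm i j x \in F).
Proof. by rewrite -{1}(tpermK i j x) mem_imset //; apply: perm_inj. Qed.

Lemma swap_setK : involutive swap_set.
Proof. by move=> F; apply/setP => x; rewrite !mem_swap_set tpermK. Qed.

Lemma swap_set_inj : injective swap_set.
Proof. exact: can_inj swap_setK. Qed.

Lemma card_swap_set (F : {set T}) : #|swap_set F| = #|F|.
Proof. by rewrite card_imset //; apply: perm_inj. Qed.

Lemma swap_setI (F G : {set T}) : swap_set (F :&: G) = swap_set F :&: swap_set G.
Proof. by apply/setP => x; rewrite !(inE, mem_swap_set). Qed.

Lemma swap_set_shift (F : {set T}) :
  i != j -> j \in F -> i \notin F -> swap_set F = i |: (F :\ j).
Proof.
move=> ij jF iF; apply/setP => x; rewrite mem_swap_set !inE.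
case: tpermP => [->|->|/eqP/negbTE-> /eqP/negbTE->] //; first by rewrite eqxx.
by rewrite eqxx orbF eq_sym (negbTE ij) (negbTE iF).
Qed.

Lemma swap_set_id (F : {set T}) : (i \in F) = (j \in F) -> swap_set F = F.
Proof.
move=> e; apply/setP => x; rewrite mem_swap_set.
by case: tpermP => [->|->|//]; rewrite e.
Qed.

End SwapSet.

Definition km1_pairs n k (B : {set {set 'I_n}}) : {set {set {set 'I_n}}} :=
  [set P : {set {set 'I_n}} |
      [exists F in B, exists G in B,
         [&& F != G, P == [set F; G] & #|F :&: G| == k.-1]]].

Section Km1Pairs.

Variables (n k : nat) (B : {set {set 'I_n}}).

Lemma km1_pairsP P :
  reflect (exists F G, [/\ P = [set F; G], F \in B, G \in B, F != G
                         & #|F :&: G| = k.-1])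
          (P \in km1_pairs k B).
Proof.
rewrite inE; apply: (iffP existsP) => [[F /andP[FB /existsP[G]]]|[F [G []]]].
  by case/andP=> GB /and3P[FG /eqP-> /eqP c]; exists F, G.
move=> -> FB GB FG c; exists F; rewrite FB; apply/existsP; exists G.
by rewrite GB FG eqxx c eqxx.
Qed.

Lemma mem_km1_pairs2 F G :
  ([set F; G] \in km1_pairs k B) =
  [&& F \in B, G \in B, F != G & #|F :&: G| == k.-1].
Proof.
apply/km1_pairsP/and4P => [[F' [G' [E FB GB FG /eqP c]]]|[FB GB FG /eqP c]].
  by case: (set2_eq E) => -[-> ->]; rewrite // eq_sym setIC.
by exists F, G.
Qed.

End Km1Pairs.

Section Shift.

Variables (n k : nat) (A : {set {set 'I_n}}) (i j : 'I_n).
Hypothesis ij : i != j.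

Local Notation sw := (swap_set i j).
Local Notation del := (delta i j A).
Local Notation DA := (Delta i j A).

Definition shifted (F : {set 'I_n}) : bool :=
  [&& j \in F, i \notin F & sw F \notin A].

Lemma deltaE F : del F = if shifted F then sw F else F.
Proof.
rewrite /delta /shifted.
case: (boolP (j \in F)) => //= jF; case: (boolP (i \in F)) => //= iF.
by rewrite swap_set_shift.
Qed.

Lemma delta_inj : {in A &, injective del}.
Proof.
move=> F G FA GA; rewrite !deltaE.
case sF: (shifted F); case sG: (shifted G) => //; first exact: swap_set_inj.
  by move=> E; move: sF; rewrite /shifted E GA !andbF.
by move=> E; move: sG; rewrite /shifted -E FA !andbF.
Qed.

Lemma mem_Delta F : F \in A -> del F \in DA.
Proof. exact: imset_f. Qed.

Lemma delta_pair_mem F G :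
  F \in A -> G \in A -> F != G -> #|F :&: G| = k.-1 ->
  shifted F = shifted G -> [set del F; del G] \in km1_pairs k DA.
Proof.
move=> FA GA FG c e; rewrite mem_km1_pairs2 !mem_Delta //=.
rewrite (inj_in_eq delta_inj) // FG !deltaE -e.
by case: (shifted F); rewrite -?swap_setI ?card_swap_set c eqxx.
Qed.

Definition shift_pair (P : {set {set 'I_n}}) : {set {set 'I_n}} :=
  if del @: P \in km1_pairs k DA then del @: P else sw @: P.

Lemma shift_pair_set2 F G :
  shift_pair [set F; G] =
  if [set del F; del G] \in km1_pairs k DA then [set del F; del G]
  else [set sw F; sw G].
Proof. by rewrite /shift_pair !imsetU1 !imset_set1. Qed.

Lemma shifted_mixed F G :
  [set F; G] \in km1_pairs k A -> [set del F; del G] \notin km1_pairs k DA ->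
  shifted F != shifted G.
Proof.
rewrite mem_km1_pairs2 => /and4P[FA GA FG /eqP c].
by apply: contra => /eqP; apply: delta_pair_mem.
Qed.

Hypothesis uA : uniform k A.

(* If G contained i but not j, then G and sw F = i |: (F :\ j) would share
   i and the k - 1 elements of F :&: G, forcing G = sw F, which is not in A. *)
Lemma unshifted_partner F G :
  F \in A -> G \in A -> #|F :&: G| = k.-1 -> shifted F -> ~~ shifted G ->
  sw G = G \/ (sw G \in A /\ del (sw G) = sw G).
Proof.
move=> FA GA c /and3P[jF iF sFA] sG.
have [iG|iG] := boolP (i \in G); have [jG|jG] := boolP (j \in G).
- by left; apply: swap_set_id; rewrite iG jG.
- exfalso.
  have sub : i |: (F :&: G) \subset sw F :&: G.
    rewrite swap_set_shift //; apply/subsetP => x; rewrite !inE.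
    case/orP => [/eqP->|/andP[-> xG]]; first by rewrite eqxx iG.
    by rewrite xG !andbT; apply/orP; right; apply: contraNneq jG => <-.
  have k_gt0 : 0 < k by rewrite -(uA FA); apply/card_gt0P; exists j.
  have card_sub : #|i |: (F :&: G)| = k.
    by rewrite cardsU1 c !inE (negbTE iF) add1n prednK.
  have GsF : G = sw F.
    apply/eqP; rewrite eqEcard card_swap_set (uA FA) (uA GA) leqnn andbT.
    have/eqP <- : sw F :&: G == G.
      by rewrite eqEcard subsetIr (uA GA) -card_sub subset_leq_card.
    exact: subsetIl.
  by rewrite -GsF GA in sFA.
- have sGA : sw G \in A by move: sG; rewrite /shifted jG iG /= negbK.
  right; split=> //; rewrite deltaE /shifted mem_swap_set tpermR.
  by rewrite (negbTE iG).
- by left; apply: swap_set_id; rewrite (negbTE iG) (negbTE jG).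
Qed.

Lemma swap_pair_mem F G :
  [set F; G] \in km1_pairs k A -> [set del F; del G] \notin km1_pairs k DA ->
  [set sw F; sw G] \in km1_pairs k DA.
Proof.
move=> FGA notFGD.
wlog sF : F G FGA notFGD / shifted F.
  move=> wlog_sF; case sF: (shifted F); first exact: wlog_sF.
  rewrite setUC; apply: wlog_sF; rewrite 1?setUC //.
  by have := shifted_mixed FGA notFGD; rewrite sF eq_sym eqbF_neg negbK.
have := shifted_mixed FGA notFGD; rewrite sF eq_sym eqb_id => sG.
move: FGA; rewrite !mem_km1_pairs2 => /and4P[FA GA FG /eqP c].
have dF : del F = sw F by rewrite deltaE sF.
have swG : sw G \in DA.
  case: (unshifted_partner FA GA c sF sG) => [->|[sGA <-]]; last exact: mem_Delta.
  by have := mem_Delta GA; rewrite deltaE (negPf sG).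
have swF : sw F \in DA by rewrite -dF mem_Delta.
rewrite swF swG (inj_eq (@swap_set_inj _ i j)) FG.
by rewrite -swap_setI card_swap_set c eqxx.
Qed.

Lemma shift_pair_collision F G H K :
  [set F; G] \in km1_pairs k A -> [set H; K] \in km1_pairs k A ->
  [set del F; del G] \in km1_pairs k DA ->
  [set del H; del K] \notin km1_pairs k DA ->
  [set del F; del G] != [set sw H; sw K].
Proof.
move=> FGA HKA FGD notHKD.
wlog sH : H K HKA notHKD / shifted H.
  move=> wlog_sH; case sH: (shifted H); first exact: wlog_sH.
  rewrite [[set sw H; sw K]]setUC; apply: wlog_sH; rewrite 1?setUC //.
  by have := shifted_mixed HKA notHKD; rewrite sH eq_sym eqbF_neg negbK.
have := shifted_mixed HKA notHKD; rewrite sH eq_sym eqb_id => sK.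
move: (FGA) (HKA); rewrite !mem_km1_pairs2.
move=> /and4P[FA GA _ _] /and4P[HA KA HK /eqP c].
have dH : del H = sw H by rewrite deltaE sH.
have dK : del K = K by rewrite deltaE (negPf sK).
apply/eqP => E.
case: (unshifted_partner HA KA c sH sK) => [swK|[sKA dsK]].
  by move: notHKD; rewrite dH dK -{1}swK -E FGD.
have FG_HsK : [set F; G] = [set H; sw K].
  by apply: (set2_inj_in delta_inj) => //; rewrite E dH dsK.
move: notHKD; rewrite mem_km1_pairs2 !mem_Delta // (inj_in_eq delta_inj) //.
rewrite HK dH dK -(card_swap_set i j) swap_setI swap_setK.
by move: FGA; rewrite FG_HsK mem_km1_pairs2 => /and4P[_ _ _ ->].
Qed.

Lemma shift_pair_mem P : P \in km1_pairs k A -> shift_pair P \in km1_pairs k DA.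
Proof.
move=> /[dup] /km1_pairsP[F [G [-> _ _ _ _]]] FGA.
by rewrite shift_pair_set2; case: ifPn => // /(swap_pair_mem FGA).
Qed.

Lemma shift_pair_inj : {in km1_pairs k A &, injective shift_pair}.
Proof.
move=> P Q /[dup] /km1_pairsP[F [G [-> FA GA _ _]]] FGA.
move=> /[dup] /km1_pairsP[H [K [-> HA KA _ _]]] HKA.
rewrite !shift_pair_set2; case: ifPn => FGD; case: ifPn => HKD E.
- by apply: (set2_inj_in delta_inj) E.
- by have := shift_pair_collision FGA HKA FGD HKD; rewrite E eqxx.
- by have := shift_pair_collision HKA FGA HKD FGD; rewrite E eqxx.
- by apply: (set2_inj_in (D := predT) (in2W (@swap_set_inj _ i j))) E.
Qed.

End Shift.

Theorem lemma2p2 (n k t : nat) (A : {set {set 'I_n}}) :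
  uniform k A -> t_intersecting t A ->
  forall i j : 'I_n, (i < j)%N ->
    (zeta_km1 k A <= zeta_km1 k (Delta i j A))%N.
Proof.
move=> uA _ i j lt_ij.
have ij : i != j by apply: contraTneq lt_ij => ->; rewrite ltnn.
change (#|km1_pairs k A| <= #|km1_pairs k (Delta i j A)|).
rewrite -(card_in_imset (shift_pair_inj ij uA)).
by apply/subset_leq_card/subsetP => _ /imsetP[P PA ->]; apply: shift_pair_mem.
Qed.
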